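(* Let $g$ be a connected simple graph and $c:E(g)\to\{1,\dots,k\}$ an admissible colouring of its edges. Suppose that for every $2\le i\le k$, every connected component of $g(i)$ is a regular graph. Then $$\sigma(A(g))=\prod_{i=1}^{k}\ \prod_{h\in a_c(i)}\frac{\sigma\big(A(g_h(i+1),h)\big)}{\mathrm{reg}(g_h^+(i+1))},$$ where dividing by $\mathrm{reg}(g^+_h(i+1))$ means removing one occurrence of $\mathrm{reg}(C)$ for each vertex $C$ of $h$ with $|C|\ge2$.
   Context: All graphs are finite and simple; $A(\cdot)$ is the adjacency matrix; $\mathrm{reg}$ denotes regularity. Spectra are multisets written multiplicatively (product = multiset union). Divisibility: identify a graph on a finite set $V$ with the assembly of its connected components. For graphs $a_1,a_2$ on the same vertex set, $a_1$ divides $a_2$ if there is a graph $h$ whose vertex set is the set of vertex sets of the connected components of $a_1$ such that $E(a_2)=E(a_1)\cup\{\{x,y\}:x\in B,\ y\in B',\ \{B,B'\}\in E(h)\}$; then $h$ is denoted $a_2/a_1$. Admissible colouring: for a colouring $c:E(g)\to\{1,\dots,k\}$, let $g(1)=g$ and, for $i\ge2$, $g(i)$ the spanning subgraph of $g$ obtained by deleting all edges of colour $j<i$; also $g(k+1)$ is the edgeless graph on $V(g)$. $c$ is admissible if (1) for each $2\le i\le k$ in the image of $c$, $g(i)$ divides $g(i-1)$, and (2) whenever an edge incident to a vertex $v$ has colour $i\ge2$, some edge of colour $i-1$ is incident to $v$. For $1\le i\le k$, $a_c(i)$ is the set of connected components of the quotient graph $g(i)/g(i+1)$ having at least two vertices.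 For $h\in a_c(i)$, $g_h(i+1)$ denotes the family of connected components $C$ of $g(i+1)$ whose vertex sets are the vertices of $h$. The matrix $A(g_h(i+1),h)$ is indexed by the vertices $C$ of $h$, with diagonal entry $\mathrm{reg}(C)$ and off-diagonal $(C,C')$ entry $\sqrt{|C||C'|}$ if $\{C,C'\}\in E(h)$ and $0$ otherwise. *)

From mathcomp Require Import all_boot all_order all_algebra.
From mathcomp Require Import reals.
Set Implicit Arguments.
Unset Strict Implicit.
Unset Printing Implicit Defensive.
Import Order.TTheory GRing.Theory Num.Theory.

(* Edge colourings with colours in
   {1,...,k} are given by a symmetric function c : V -> V -> nat, only
   meaningful on edges. *)

Section Defs.
Variable V : finType.

Definition simple_graph (e : rel V) := symmetric e /\ irreflexive e.

Definition connected_graph (e : rel V) := forall x y, connect e x y.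

Definition comp (r : rel V) (x : V) : {set V} := [set y | connect r x y].

Definition comps (r : rel V) : {set {set V}} := [set comp r x | x : V].

Definition divides (a1 a2 : rel V) : Prop :=
  exists h : rel {set V}, symmetric h /\ irreflexive h /\
    forall x y, a2 x y = a1 x y ||
      [exists B in comps a1, exists B' in comps a1,
         [&& h B B', x \in B & y \in B']].

Definition colouring (e : rel V) (k : nat) (c : V -> V -> nat) : Prop :=
  (forall x y, c x y = c y x) /\
  (forall x y, e x y -> (1 <= c x y <= k)%N).

(* g(i): delete every edge of colour j < i  (g(1) = g, g(k+1) edgeless) *)
Definition gcol (e : rel V) (c : V -> V -> nat) (i : nat) : rel V :=
  fun x y => e x y && (i <= c x y)%N.

Definition admissible (e : rel V) (k : nat) (c : V -> V -> nat) : Prop :=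
  (forall i, (2 <= i <= k)%N -> (exists x y, e x y && (c x y == i)) ->
      divides (gcol e c i) (gcol e c i.-1)) /\
  (forall v w, e v w -> (2 <= c v w)%N ->
      exists u, e v u && (c v u == (c v w).-1)).

Definition deg (r : rel V) (x : V) : nat := #|[set y | r x y]|.

Definition regular_on (r : rel V) (C : {set V}) : Prop :=
  forall x y, x \in C -> y \in C -> deg r x = deg r y.

Definition reg (r : rel V) (C : {set V}) : nat :=
  if [pick x in C] is Some x then deg r x else 0%N.

(* the quotient graph g(i)/g(i+1), on the components of g(i+1) *)
Definition quot (e : rel V) (c : V -> V -> nat) (i : nat) : rel {set V} :=
  fun B B' => [&& B \in comps (gcol e c i.+1), B' \in comps (gcol e c i.+1),
                  B != B' &
                  [exists x in B, exists y in B', gcol e c i x y]].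

Definition a_c (e : rel V) (c : V -> V -> nat) (i : nat) : {set {set {set V}}} :=
  [set H in [set [set B' | connect (quot e c i) B B'] | B in comps (gcol e c i.+1)]
     | (2 <= #|H|)%N].

End Defs.

Local Open Scope ring_scope.
Section Spectral.
Variable R : realType.

Definition spec_mult (n : nat) (M : 'M[R]_n) (lambda : R) : nat :=
  mup lambda (char_poly M).

Variable V : finType.

Definition adj_mx (e : rel V) : 'M[R]_#|V| :=
  \matrix_(p, q) ((e (enum_val p) (enum_val q))%:R : R).

(* A(g_h(i+1), h) for H in a_c(i), indexed by an enumeration of H *)
Definition quot_mx (e : rel V) (c : V -> V -> nat) (i : nat)
    (H : {set {set V}}) : 'M[R]_#|H| :=
  \matrix_(p, q)
    (let C := @enum_val _ (mem H) p in let C' := @enum_val _ (mem H) q in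
     if p == q then ((reg (gcol e c i.+1) C)%:R : R)
     else if quot e c i C C' then Num.sqrt ((#|C| * #|C'|)%N%:R)
     else 0).

End Spectral.

From mathcomp Require Import all_boot all_order all_algebra.
From mathcomp Require Import fingroup perm reals.
Set Implicit Arguments.
Unset Strict Implicit.
Unset Printing Implicit Defensive.
Import Order.TTheory GRing.Theory Num.Theory.

(* Fix a level i.  Divisibility says that each component W of g(i) is obtained
   from the components C of g(i+1) inside W, which are regular, by joining some
   pairs of them completely.  If P is the vertex/component incidence matrix of W,
   then A_W = (direct sum of the A_C) + P B P^T, with B the adjacency matrix of
   the joins, and regularity gives A_C P = reg C * P.  Sylvester's identity
   det (1 + X Y) = det (1 + Y X) then yields
     det (x - A_W) * prod_C (x - reg C) = prod_C det (x - A_C) * det (x - Q),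
   Q being the quotient matrix A(g_h(i+1), h).  Comparing the multiplicities of
   lambda, the spectrum of the non-trivial components of g(i) is that of g(i+1)
   corrected by the quotient terms of level i, and the theorem follows by
   telescoping from g(1) = g down to the edgeless g(k+1). *)

(** * Connected components and divisibility *)

Section Components.
Variables (T : finType) (r : rel T).
Hypothesis r_sym : symmetric r.

Lemma comp_refl x : x \in comp r x.
Proof. by rewrite inE connect0. Qed.

Lemma comp_eq x y : y \in comp r x -> comp r y = comp r x.
Proof.
rewrite inE => cxy; apply/setP => z; rewrite !inE; apply/idP/idP => h.
  exact: connect_trans cxy h.
by rewrite (sym_connect_sym r_sym) in cxy; exact: connect_trans cxy h.
Qed.

Lemma eq_comp x y : (comp r x == comp r y) = connect r x y.
Proof.
apply/eqP/idP => [E|cxy]; first by have := comp_refl y; rewrite -E inE.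
by apply/esym/comp_eq; rewrite inE.
Qed.

Lemma compsP C : reflect (exists x, C = comp r x) (C \in comps r).
Proof. by apply: (iffP imsetP) => [[x _ ->]|[x ->]]; exists x. Qed.

Lemma comp_in_comps x : comp r x \in comps r.
Proof. by apply/compsP; exists x. Qed.

Lemma comps_comp C u : C \in comps r -> u \in C -> C = comp r u.
Proof. by case/compsP => x -> ux; rewrite (comp_eq ux). Qed.

Lemma comps_eq C C' u : C \in comps r -> C' \in comps r -> u \in C -> u \in C' -> C = C'.
Proof. by move=> CP C'P uC uC'; rewrite (comps_comp CP uC) (comps_comp C'P uC'). Qed.

Lemma comps_closed C u t : C \in comps r -> u \in C -> r u t -> t \in C.
Proof. by move=> CP uC rut; rewrite (comps_comp CP uC) inE; exact: connect1. Qed.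

Lemma comps_neq0 C : C \in comps r -> C != set0.
Proof. by case/compsP => x ->; apply/set0Pn; exists x; apply: comp_refl. Qed.

End Components.

Lemma comp_sub (T : finType) (r s : rel T) x : subrel r s -> comp r x \subset comp s x.
Proof.
move=> rs; apply/subsetP => y; rewrite !inE; apply: connect_sub => u v ruv.
by apply/connect1/rs.
Qed.

Lemma comp_edgeless (T : finType) (r : rel T) x :
  r =2 (fun _ _ => false) -> comp r x = [set x].
Proof.
move=> r0; apply/setP => y; rewrite !inE; apply/idP/eqP => [/connectP[[|z p] /=]|->].
- by move=> _ ->.
- by rewrite r0.
- exact: connect0.
Qed.

Definition quot_rel (T : finType) (a1 a2 : rel T) : rel {set T} := fun B B' =>
  [&& B \in comps a1, B' \in comps a1, B != B' &
      [exists x in B, exists y in B', a2 x y]].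

Lemma quot_rel_sym (T : finType) (a1 a2 : rel T) :
  symmetric a2 -> symmetric (quot_rel a1 a2).
Proof.
move=> a2_sym; suff imp B B' : quot_rel a1 a2 B B' -> quot_rel a1 a2 B' B.
  by move=> B B'; apply/idP/idP; apply: imp.
case/and4P => BP B'P neq /existsP[x /andP[xB /existsP[y /andP[yB' a2xy]]]].
rewrite /quot_rel BP B'P eq_sym neq; apply/existsP; exists y; rewrite yB' /=.
by apply/existsP; exists x; rewrite xB a2_sym.
Qed.

Lemma divides_edgeless (T : finType) (a1 a2 : rel T) :
  a1 =2 (fun _ _ => false) -> symmetric a2 -> irreflexive a2 -> divides a1 a2.
Proof.
move=> a10 a2_sym a2_irr.
have a1_sym : symmetric a1 by move=> x y; rewrite !a10.
have compE x : comp a1 x = [set x] := comp_edgeless x a10.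
exists (quot_rel a1 a2); split; first exact: quot_rel_sym.
split=> [B|x y]; first by rewrite /quot_rel eqxx !andbF.
rewrite a10 /=; apply/idP/idP => [a2xy|].
  apply/existsP; exists [set x]; rewrite -compE comp_in_comps /=.
  apply/existsP; exists [set y]; rewrite -compE comp_in_comps /= /quot_rel.
  rewrite !comp_in_comps !compE !set11 (inj_eq set1_inj) /= andbT.
  have -> : x != y by apply: contraTneq a2xy => ->; rewrite a2_irr.
  by apply/existsP; exists x; rewrite set11 /=; apply/existsP; exists y; rewrite set11.
case/existsP => B /andP[BP /existsP[B' /andP[B'P /and3P[q xB yB']]]].
move: q; rewrite (comps_comp a1_sym BP xB) (comps_comp a1_sym B'P yB') !compE.
by case/and4P => _ _ _ /existsP[x0 /andP[/set1P-> /existsP[y0 /andP[/set1P->]]]].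
Qed.

Section Divides.
Variables (T : finType) (a1 a2 : rel T).
Hypotheses (a1_sym : symmetric a1) (a1_div : divides a1 a2).

Lemma divides_connect u v : connect a1 u v -> a2 u v = a1 u v.
Proof.
case: a1_div => h [_ [h_irr a2E]] cuv; rewrite a2E; case: (a1 u v) => //=.
apply/negbTE/negP => /existsP[B /andP[BP /existsP[B' /andP[B'P /and3P[hBB' uB vB']]]]].
move: hBB'; rewrite (comps_comp a1_sym BP uB) (comps_comp a1_sym B'P vB').
by rewrite (@comp_eq _ _ a1_sym u v) ?h_irr // inE.
Qed.

Lemma divides_between u v u' v' :
  connect a1 u u' -> connect a1 v v' -> ~~ connect a1 u v -> a2 u v -> a2 u' v'.
Proof.
case: a1_div => h [_ [_ a2E]] cuu' cvv' ncuv; rewrite a2E => /orP[a1uv|].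
  by move: ncuv; rewrite (connect1 a1uv).
case/existsP=> B /andP[BP /existsP[B' /andP[B'P /and3P[hBB' uB vB']]]].
rewrite a2E; apply/orP; right; apply/existsP; exists B; rewrite BP /=.
apply/existsP; exists B'; rewrite B'P hBB' /=.
by rewrite (comps_comp a1_sym BP uB) (comps_comp a1_sym B'P vB') !inE cuu' cvv'.
Qed.

Lemma divides_join C C' u v : C \in comps a1 -> C' \in comps a1 -> u \in C -> v \in C' ->
  a2 u v = a1 u v || quot_rel a1 a2 C C'.
Proof.
move=> CP C'P uC vC'; case: (eqVneq C C') => [eqC|neC].
  rewrite /quot_rel eqC eqxx !andbF orbF; apply: divides_connect.
  by move: vC'; rewrite -eqC (comps_comp a1_sym CP uC) inE.
have a1uv : a1 u v = false.
  apply: contra_neqF neC => a1uv.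
  apply: (comps_eq a1_sym CP C'P _ vC').
  exact: (comps_closed a1_sym CP uC a1uv).
rewrite a1uv /= /quot_rel CP C'P neC /=; apply/idP/idP => [a2uv|].
  by apply/existsP; exists u; rewrite uC /=; apply/existsP; exists v; rewrite vC'.
case/existsP => x /andP[xC /existsP[y /andP[yC' a2xy]]].
apply: (divides_between _ _ _ a2xy).
- by move: uC; rewrite (comps_comp a1_sym CP xC) inE.
- by move: vC'; rewrite (comps_comp a1_sym C'P yC') inE.
- rewrite -(eq_comp a1_sym); apply: contra neC => /eqP E.
  by rewrite (comps_comp a1_sym CP xC) (comps_comp a1_sym C'P yC') E.
Qed.

End Divides.


Section Refinement.
Variables (T : finType) (r s : rel T).
Hypotheses (r_sym : symmetric r) (s_sym : symmetric s) (rs : subrel r s).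

Definition subcomps (W : {set T}) : {set {set T}} := [set C in comps r | C \subset W].

Lemma comp_subset_comps W u : W \in comps s -> (comp r u \subset W) = (u \in W).
Proof.
move=> WP; apply/idP/idP => [/subsetP|uW]; first by apply; exact: comp_refl.
by rewrite (comps_comp s_sym WP uW) comp_sub.
Qed.

Lemma partition_subcomps W : W \in comps s -> partition (subcomps W) W.
Proof.
move=> WP; apply/and3P; split.
- rewrite eqEsubset; apply/andP; split.
    by apply/bigcupsP => C; rewrite inE => /andP[_].
  apply/subsetP => u uW; apply/bigcupP; exists (comp r u); last exact: comp_refl.
  by rewrite inE comp_in_comps comp_subset_comps.
- apply/trivIsetP => C C'; rewrite !inE => /andP[CP _] /andP[C'P _] neq.
  rewrite -setI_eq0; apply: contraR neq => /set0Pn[u /setIP[uC uC']].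
  by rewrite (comps_eq r_sym CP C'P uC uC').
- by apply/negP; rewrite inE => /andP[/comps_neq0]; rewrite eqxx.
Qed.

Lemma card_subcomps W : W \in comps s -> #|subcomps W| <= #|W|.
Proof.
move=> /partition_subcomps partW; rewrite (card_partition partW) -sum1_card.
by apply: leq_sum => C CW; rewrite card_gt0 (partition_neq0 partW CW).
Qed.

Lemma subcomps_small W : W \in comps s -> #|subcomps W| < 2 -> subcomps W = [set W].
Proof.
move=> WP; have partW := partition_subcomps WP.
have [u uW] : exists u, u \in W by apply/set0Pn; apply: comps_neq0 WP.
have CW : comp r u \in subcomps W by rewrite inE comp_in_comps comp_subset_comps.
rewrite ltnS => /card_le1_eqP eqW.
suff E : subcomps W = [set comp r u].
  by rewrite E; congr [set _]; rewrite -(cover_partition partW) E cover1.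
by apply/setP => C; rewrite [RHS]inE; apply/idP/eqP => [CW'|->] //; apply: eqW.
Qed.

Lemma sum_subcomps (M : nmodType) (F : {set T} -> M) :
  (\sum_(W in comps s | (1 < #|W|)%N) \sum_(C in subcomps W | (1 < #|C|)%N) F C =
   \sum_(C in comps r | (1 < #|C|)%N) F C)%R.
Proof.
rewrite (exchange_big_dep (fun C => (C \in comps r) && (1 < #|C|)%N)) /=; last first.
  by move=> W C _; rewrite inE => /andP[/andP[-> _] ->].
apply: eq_bigr => C /andP[/compsP[x ->] C2].
rewrite (big_pred1 (comp s x)) // => W /=; rewrite inE comp_in_comps /=.
apply/idP/eqP => [/andP[/andP[WP _] /andP[xW _]]|->].
  by rewrite (comps_comp s_sym WP (subsetP xW x (comp_refl r x))).
rewrite comp_in_comps comp_subset_comps ?comp_in_comps ?comp_refl // C2 andbT /=.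
by rewrite (leq_trans C2) // subset_leq_card // comp_sub.
Qed.

Lemma connect_quot_rel x y : connect s x y -> connect (quot_rel r s) (comp r x) (comp r y).
Proof.
move/connectP => [p pth ->]; elim: p x pth => [|z p IH] x /=; first by rewrite connect0.
case/andP => sxz pth; apply: connect_trans (IH z pth).
have [->|ne] := eqVneq (comp r x) (comp r z); first exact: connect0.
apply: connect1; rewrite /quot_rel !comp_in_comps ne /=.
by apply/existsP; exists x; rewrite comp_refl /=; apply/existsP; exists z; rewrite comp_refl.
Qed.

Lemma closed_subcomps W : W \in comps s -> closed (quot_rel r s) (subcomps W).
Proof.
move=> WP B B' /and4P[BP B'P _ /existsP[y /andP[yB /existsP[z /andP[zB' syz]]]]].
rewrite !inE BP B'P (comps_comp r_sym BP yB) (comps_comp r_sym B'P zB') !comp_subset_comps //.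
case/compsP: WP => w ->; rewrite !inE; apply/idP/idP => [wy|wz].
  exact: connect_trans wy (connect1 syz).
by apply: connect_trans wz (connect1 _); rewrite s_sym.
Qed.

Lemma quot_rel_class x :
  [set B | connect (quot_rel r s) (comp r x) B] = subcomps (comp s x).
Proof.
apply/setP => B; rewrite inE; apply/idP/idP => [xB|].
  rewrite -(closed_connect (closed_subcomps (comp_in_comps s x)) xB).
  by rewrite inE comp_in_comps comp_subset_comps ?comp_in_comps ?comp_refl.
rewrite inE => /andP[/compsP[y ->]]; rewrite comp_subset_comps ?comp_in_comps // inE.
exact: connect_quot_rel.
Qed.

End Refinement.

Local Open Scope ring_scope.

(** * Principal submatrices *)

Lemma big_ord_enum_rank (R : Type) (idx : R) (op : Monoid.com_law idx)
    (T : finType) (F : 'I_#|T| -> R) :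
  \big[op/idx]_(q < #|T|) F q = \big[op/idx]_t F (enum_rank t).
Proof.
by rewrite (reindex enum_rank) //; exists enum_val => t _; [exact: enum_rankK | exact: enum_valK].
Qed.

Section PadMatrix.
Variables (K : comPzRingType) (T : finType).

Lemma sumr_mul_delta n (G : 'I_n -> K) q : \sum_j G j * (j == q)%:R = G q.
Proof.
rewrite (bigD1 q) //= eqxx mulr1 big1 ?addr0 // => j /negPf->; exact: mulr0.
Qed.

Lemma sumr_delta_mul n (G : 'I_n -> K) q : \sum_j (q == j)%:R * G j = G q.
Proof. by under eq_bigr do rewrite mulrC eq_sym; exact: sumr_mul_delta. Qed.

(* Principal submatrices are padded with the identity, so that all of them
   live in 'M_#|T| and can be multiplied. *)
Definition padmx (S : {set T}) (F : T -> T -> K) : 'M[K]_#|T| :=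
  \matrix_(p, q) (if (enum_val p \in S) && (enum_val q \in S)
                  then F (enum_val p) (enum_val q)
                  else (enum_val p == enum_val q)%:R).

Lemma padmx_set0 (F : T -> T -> K) : padmx set0 F = 1%:M.
Proof. by apply/matrixP => p q; rewrite !mxE !inE /= (inj_eq enum_val_inj). Qed.

Lemma padmxU (S1 S2 : {set T}) (F : T -> T -> K) :
  [disjoint S1 & S2] ->
  (forall u v, u \in S1 -> v \in S2 -> F u v = 0 /\ F v u = 0) ->
  padmx (S1 :|: S2) F = padmx S1 F *m padmx S2 F.
Proof.
move=> dis F0; apply/matrixP => p q; rewrite !mxE.
have neq a b : a \in S1 -> b \notin S1 -> (a == b) = false.
  by move=> aS bS; apply: contraNF bS => /eqP <-.
have nS2 a : a \in S1 -> (a \in S2) = false by move=> aS; apply: (disjointFr dis aS).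
case uS1: (enum_val p \in S1).
- have E j : padmx S1 F p j * padmx S2 F j q = padmx S1 F p j * (j == q)%:R.
    rewrite !mxE uS1 /=; case tS1: (enum_val j \in S1).
      by rewrite nS2 //= (inj_eq enum_val_inj).
    by rewrite neq ?tS1 // !mul0r.
  rewrite (eq_bigr _ (fun j _ => E j)) sumr_mul_delta !mxE uS1 !inE uS1 /=.
  case vS1: (enum_val q \in S1) => //=.
  case vS2: (enum_val q \in S2) => //=.
  by rewrite neq ?vS1 //; case: (F0 _ _ uS1 vS2) => ->.
- have E j : padmx S1 F p j * padmx S2 F j q = (p == j)%:R * padmx S2 F j q.
    by rewrite !mxE uS1 /= (inj_eq enum_val_inj).
  rewrite (eq_bigr _ (fun j _ => E j)) sumr_delta_mul !mxE !inE uS1 /=.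
  case uS2: (enum_val p \in S2) => //=.
  case vS1: (enum_val q \in S1) => //=.
  rewrite nS2 //= eq_sym neq //; last by rewrite uS1.
  by case: (F0 _ _ vS1 uS2) => _ ->.
Qed.

Lemma det_padmx_cover (P : {set {set T}}) (F : T -> T -> K) :
  trivIset P ->
  (forall C C' u v, C \in P -> C' \in P -> C != C' -> u \in C -> v \in C' -> F u v = 0) ->
  \det (padmx (cover P) F) = \prod_(C in P) \det (padmx C F).
Proof.
elim: {P}_.+1 {-2}P (ltnSn #|P|) => // n IH P szP /trivIsetP tiP F0.
have [->|[C CP]] := set_0Vmem P; first by rewrite /cover !big_set0 padmx_set0 det1.
have F0' : forall D D' u v, D \in P :\ C -> D' \in P :\ C -> D != D' ->
    u \in D -> v \in D' -> F u v = 0.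
  by move=> D D' u v /setD1P[_ DP] /setD1P[_ D'P]; exact: F0.
rewrite /cover (big_setD1 C CP) [RHS](big_setD1 C CP) /= padmxU ?det_mulmx ?IH //.
- by move: szP; rewrite (cardsD1 C P) CP ltnS.
- by apply/trivIsetP => D D' /setD1P[_ DP] /setD1P[_ D'P]; exact: tiP.
- by apply/bigcup_disjointP => D /setD1P[DC DP]; apply: tiP; rewrite // eq_sym.
- move=> u v uC /bigcupP[D /setD1P[DC DP] vD].
  by split; [apply: (F0 C D) | apply: (F0 D C)]; rewrite // eq_sym.
Qed.

Lemma det_castmx n m (e : n = m) (A : 'M[K]_n) : \det (castmx (e, e) A) = \det A.
Proof. by case: m / e; rewrite castmx_id. Qed.

Lemma det_perm_reindex n (s : 'S_n) (A : 'M[K]_n) :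
  \det (\matrix_(i, j) A (s i) (s j)) = \det A.
Proof.
have -> : \matrix_(i, j) A (s i) (s j) = row_perm s (col_perm s A).
  by apply/matrixP => i j; rewrite !mxE.
rewrite row_permE col_permE !det_mulmx !det_perm odd_permV.
by rewrite mulrCA -expr2 sqrr_sign mulr1.
Qed.

Lemma det_inj_reindex n (e : n = #|T|) (phi : 'I_n -> T) (G : T -> T -> K) :
  injective phi ->
  \det (\matrix_(i, j < n) G (phi i) (phi j)) =
  \det (\matrix_(i, j < #|T|) G (enum_val i) (enum_val j)).
Proof.
move=> phi_inj; pose s0 i := cast_ord (esym e) (enum_rank (phi i)).
have s0_inj : injective s0 by move=> i j /cast_ord_inj /enum_rank_inj /phi_inj.
symmetry; rewrite -(det_castmx (esym e)) -(det_perm_reindex (perm s0_inj)).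
congr (\det _).
apply/matrixP => i j; rewrite !mxE castmxE /= !permE /s0 /= esymK !cast_ordKV.
by rewrite mxE !enum_rankK.
Qed.

Lemma det_padmx (S : {set T}) (F : T -> T -> K) :
  \det (padmx S F) = \det (\matrix_(i, j < #|S|) F (enum_val i) (enum_val j)).
Proof.
pose phi (i : 'I_(#|S| + #|~: S|)) : T :=
  match split i with inl a => enum_val a | inr b => enum_val b end.
have inS (a : 'I_#|S|) : enum_val a \in S := enum_valP a.
have notinS (b : 'I_#|~: S|) : enum_val b \in S = false.
  by apply/negbTE; rewrite -in_setC; apply: enum_valP.
have phi_inj : injective phi.
  move=> i j; rewrite /phi; case: splitP => a ea; case: splitP => b eb.
  - by move/enum_val_inj => ab; apply/val_inj; rewrite /= ea eb ab.
  - by move=> E; have := inS a; rewrite E notinS.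
  - by move=> E; have := inS b; rewrite -E notinS.
  - by move/enum_val_inj => ab; apply/val_inj; rewrite /= ea eb ab.
pose G u v := if (u \in S) && (v \in S) then F u v else (u == v)%:R.
have -> : padmx S F = \matrix_(i, j < #|T|) G (enum_val i) (enum_val j).
  by apply/matrixP => i j; rewrite !mxE.
rewrite -(det_inj_reindex (cardsC S) G phi_inj).
have -> : \matrix_(i, j) G (phi i) (phi j) =
    block_mx (\matrix_(i, j < #|S|) F (enum_val i) (enum_val j)) 0 0 1%:M.
  apply/matrixP => i j; rewrite -[i]splitK -[j]splitK.
  case: (split i) => a; case: (split j) => b; rewrite mxE /phi /G !unsplitK /=.
  all: rewrite ?block_mxEul ?block_mxEur ?block_mxEdl ?block_mxEdr ?mxE.
  - by rewrite !inS.
  - by rewrite notinS andbF; case: eqP => // E; have := inS a; rewrite E notinS.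
  - by rewrite notinS; case: eqP => // E; have := inS b; rewrite -E notinS.
  - by rewrite notinS (inj_eq enum_val_inj).
by rewrite det_ublock det1 mulr1.
Qed.

Lemma det1D_mulmxC n m (A : 'M[K]_(n, m)) (B : 'M[K]_(m, n)) :
  \det (1%:M + A *m B) = \det (1%:M + B *m A).
Proof.
have E1 : block_mx 1%:M (- A) B 1%:M =
    block_mx 1%:M 0 B 1%:M *m block_mx 1%:M (- A) 0 (1%:M + B *m A).
  by rewrite mulmx_block !mul1mx !mul0mx !mulmx1 !addr0 ?add0r mulmxN addrCA addNr addr0.
have E2 : block_mx 1%:M (- A) B 1%:M =
    block_mx 1%:M (- A) 0 1%:M *m block_mx (1%:M + A *m B) 0 B 1%:M.
  by rewrite mulmx_block !mul1mx !mul0mx !mulmx1 ?addr0 !add0r mulNmx addrK.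
have := congr1 determinant E2; rewrite {1}E1 !det_mulmx det_lblock det_ublock.
by rewrite det_ublock det_lblock !det1 !mul1r mulr1.
Qed.

End PadMatrix.

(** * Characteristic polynomials of induced subgraphs *)

Section Degree.
Variables (T : finType) (r : rel T).

Lemma deg_closed (C : {set T}) u :
  (forall t, r u t -> t \in C) -> (deg r u = \sum_(t in C) r u t)%N.
Proof.
move=> closedC; rewrite /deg -sum1_card [LHS]big_mkcond [RHS]big_mkcond /=.
apply: eq_bigr => t _; rewrite inE.
by case rut: (r u t); [rewrite closedC | case: (t \in C)].
Qed.

Lemma reg_regular_on (C : {set T}) u : regular_on r C -> u \in C -> reg r C = deg r u.
Proof.
by move=> regC uC; rewrite /reg; case: pickP => [y yC|/(_ u)]; [apply: regC | rewrite uC].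
Qed.

End Degree.

Definition adjf (L : pzSemiRingType) (T : Type) (r : rel T) (u v : T) : L := (r u v)%:R.
Arguments adjf {L T} r u v.

Definition char_entry (L : pzRingType) (T : eqType) (A : T -> T -> L) (x : L) (u v : T) : L :=
  x *+ (u == v) - A u v.

Section CharPoly.
Variables (R : numFieldType) (T : finType).

Lemma poly_eq0_horner (p : {poly R}) : (forall x, p.[x] = 0) -> p = 0.
Proof.
move=> hp; apply/eqP; apply/negPn/negP => p0.
suff : (size p < size p)%N by rewrite ltnn.
have {1}<- : size [seq (i%:R : R) | i <- iota 0 (size p)] = size p.
  by rewrite size_map size_iota.
apply: max_poly_roots p0 _ _.
  by apply/allP => y /mapP[i _ ->]; rewrite /root hp.
by rewrite map_inj_uniq ?iota_uniq // => i j /eqP; rewrite eqr_nat => /eqP.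
Qed.

Lemma poly_eq_horner_nonroot (p q g : {poly R}) : g != 0 ->
  (forall x, g.[x] != 0 -> p.[x] = q.[x]) -> p = q.
Proof.
move=> g0 hx; apply/eqP; rewrite -subr_eq0.
have : (p - q) * g = 0.
  apply: poly_eq0_horner => x; rewrite hornerM hornerD hornerN.
  by case: (eqVneq g.[x] 0) => [->|gx]; rewrite ?mulr0 // hx // subrr mul0r.
by move/eqP; rewrite mulf_eq0 (negPf g0) orbF.
Qed.

Lemma mup_prod (I : finType) (P : pred I) (F : I -> {poly R}) (l : R) :
  (forall i, P i -> F i != 0) ->
  mup l (\prod_(i | P i) F i) = (\sum_(i | P i) mup l (F i))%N.
Proof.
move=> F0; suff [] : \prod_(i | P i) F i != 0 /\
    mup l (\prod_(i | P i) F i) = (\sum_(i | P i) mup l (F i))%N by [].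
apply: (big_rec2 (fun p n => p != 0 /\ mup l p = n)).
  by rewrite oner_neq0 mupNroot // root1.
move=> i p n Pi [p0 <-]; split; first by rewrite mulf_neq0 ?F0.
by rewrite mupM ?F0.
Qed.

Lemma mup_XsubC (l a : R) : mup l ('X - a%:P : {poly R}) = (a == l).
Proof. by have := mup_XsubCX 1 l a; rewrite expr1 => ->; case: eqP. Qed.

Definition char_poly_on (S : {set T}) (A : T -> T -> R) : {poly R} :=
  \det (padmx S (char_entry (fun u v => (A u v)%:P) 'X)).

Lemma char_poly_onE (S : {set T}) (A : T -> T -> R) :
  char_poly_on S A = char_poly (\matrix_(i, j < #|S|) A (enum_val i) (enum_val j)).
Proof.
rewrite /char_poly_on det_padmx; congr (\det _); apply/matrixP => i j.
by rewrite !mxE /char_entry (inj_eq enum_val_inj).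
Qed.

Lemma char_poly_on_monic (S : {set T}) (A : T -> T -> R) : char_poly_on S A \is monic.
Proof. by rewrite char_poly_onE char_poly_monic. Qed.

Lemma char_poly_on_neq0 (S : {set T}) (A : T -> T -> R) : char_poly_on S A != 0.
Proof. exact/monic_neq0/char_poly_on_monic. Qed.

Lemma horner_char_poly_on (S : {set T}) (A : T -> T -> R) x :
  (char_poly_on S A).[x] = \det (padmx S (char_entry A x)).
Proof.
rewrite -horner_evalE -det_map_mx; congr (\det _); apply/matrixP => i j.
rewrite !mxE; case: ifP => _; last by rewrite rmorph_nat.
by rewrite /char_entry /= horner_evalE hornerD hornerN hornerMn hornerX hornerC.
Qed.

Lemma char_poly_on_cover (P : {set {set T}}) (A : T -> T -> R) :
  trivIset P ->
  (forall C C' u v, C \in P -> C' \in P -> C != C' -> u \in C -> v \in C' -> A u v = 0) ->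
  char_poly_on (cover P) A = \prod_(C in P) char_poly_on C A.
Proof.
move=> tiP A0; apply: det_padmx_cover => // C C' u v CP C'P neC uC vC'; rewrite /char_entry.
have /trivIsetP/(_ C C' CP C'P neC) dis := tiP.
have -> : (u == v) = false by apply: contraTF vC' => /eqP <-; rewrite (disjointFr dis uC).
by rewrite (A0 C C') // subr0.
Qed.

Lemma char_poly_on_set1 v (A : T -> T -> R) : char_poly_on [set v] A = 'X - (A v v)%:P.
Proof.
have ev (p : 'I_#|[set v]|) : enum_val p = v by apply/set1P; apply: enum_valP.
rewrite char_poly_onE char_poly_trig; last first.
  apply/is_trig_mxP => p q; have : (q < 1)%N by rewrite -(cards1 v).
  by rewrite ltnS leqn0 => /eqP ->.
under eq_bigr do rewrite !mxE !ev.
by rewrite big_const_ord cards1 /= mulr1.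
Qed.

Lemma char_poly_on_setT (A : T -> T -> R) :
  char_poly_on [set: T] A =
  char_poly (\matrix_(p, q < #|T|) A (enum_val p) (enum_val q)).
Proof.
congr (\det _); apply/matrixP => p q.
by rewrite !mxE !inE /= /char_entry (inj_eq enum_val_inj).
Qed.

End CharPoly.

(** * Joins of regular graphs *)

Section Join.
Variables (R : rcfType) (T : finType).
Variables (r s : rel T) (W : {set T}) (H : {set {set T}}) (hm : rel {set T}).
Hypothesis partH : partition H W.
Hypothesis closedH : forall C u t, C \in H -> u \in C -> r u t -> t \in C.
Hypothesis regH : forall C, C \in H -> regular_on r C.
Hypothesis joinH : forall C C' u v, C \in H -> C' \in H -> u \in C -> v \in C' ->
  s u v = r u v || hm C C'.
Hypothesis hm_irr : irreflexive hm.

Definition quot_entry (C C' : {set T}) : R :=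
  if C == C' then (reg r C)%:R
  else if hm C C' then Num.sqrt (#|C| * #|C'|)%N%:R else 0.

Let blockP u : u \in W -> exists2 C, C \in H & u \in C.
Proof. by rewrite -(cover_partition partH) => /bigcupP[C]; exists C. Qed.

Let block_sub C u : C \in H -> u \in C -> u \in W.
Proof. by move=> CH; apply/subsetP; apply: partitionS partH CH. Qed.

Let block_eq C C' u : C \in H -> C' \in H -> u \in C -> u \in C' -> C = C'.
Proof.
move=> CH C'H uC uC'; have tiH := partition_trivIset partH.
by rewrite -(def_pblock tiH CH uC) (def_pblock tiH C'H uC').
Qed.

Let block_deg C u : C \in H -> u \in C -> (\sum_(t in C) r u t)%N = reg r C.
Proof.
move=> CH uC; rewrite (reg_regular_on (regH CH) uC).
by rewrite (deg_closed (fun t => closedH CH uC (t:=t))).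
Qed.

Definition incmx : 'M[R]_(#|T|, #|{set T}|) :=
  \matrix_(p, j) ((enum_val j \in H) && (enum_val p \in enum_val j))%:R.
Definition quot_adjmx : 'M[R]_#|{set T}| :=
  \matrix_(i, j) ((enum_val i \in H) && (enum_val j \in H) && hm (enum_val i) (enum_val j))%:R.
Definition shift_row (x : R) : 'rV[R]_#|{set T}| :=
  \row_i (if enum_val i \in H then x - (reg r (enum_val i))%:R else 1).
Definition card_row : 'rV[R]_#|{set T}| :=
  \row_i (if enum_val i \in H then (#|enum_val i|)%:R else 0).
Definition sqrt_card_row : 'rV[R]_#|{set T}| :=
  \row_i (if enum_val i \in H then Num.sqrt (#|enum_val i|)%:R else 1).

Lemma incmx_block p C : C \in H -> enum_val p \in C ->
  forall i, incmx p i = (enum_rank C == i)%:R.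
Proof.
move=> CH uC i; rewrite mxE; congr (_%:R).
case: eqP => [<-|ne]; first by rewrite enum_rankK CH uC.
case: andP => // [[iH ui]]; exfalso; apply: ne; rewrite (block_eq CH iH uC ui).
by rewrite enum_valK.
Qed.

Lemma incmx_out p : enum_val p \notin W -> forall i, incmx p i = 0.
Proof.
move=> uW i; rewrite mxE; case: andP => // [[iH ui]].
by move: uW; rewrite (block_sub iH ui).
Qed.

Lemma char_incmx x :
  padmx W (char_entry (adjf r) x) *m incmx = incmx *m diag_mx (shift_row x).
Proof.
apply/matrixP => p j; rewrite mul_mx_diag !mxE.
rewrite big_ord_enum_rank; under eq_bigr => t _ do rewrite !mxE enum_rankK mulr_natr mulrb.
set u := enum_val p; set C := enum_val j.
case CH: (C \in H) => /=; last by rewrite mul0r big1.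
rewrite -big_mkcond /=.
case uW: (u \in W) => /=.
- have E t : t \in C ->
      (if true && (t \in W) then char_entry (adjf r) x u t else (u == t)%:R) =
      char_entry (adjf r) x u t.
    by move=> tC; rewrite (block_sub CH tC).
  rewrite (eq_bigr _ E) /char_entry /adjf sumrB.
  case uC: (u \in C).
  + rewrite (bigD1 u) //= eqxx big1 ?addr0; last first.
      by move=> t /andP[_]; rewrite eq_sym => /negPf->.
    by rewrite -natr_sum block_deg // mul1r.
  + rewrite big1; last first.
      by move=> t tC; case: eqP => [ut|]; [move: uC; rewrite ut tC | rewrite mulr0n].
    rewrite big1 ?subr0 ?mul0r // => t tC; case rut: (r u t) => //.
    have [Cu CuH uCu] := blockP uW.
    by move: uC; rewrite -(block_eq CuH CH (closedH CuH uCu rut) tC) uCu.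
- case uC: (u \in C); first by move: uW; rewrite (block_sub CH uC).
  rewrite mul0r big1 // => t tC.
  by case ut: (u == t) => //; move: uW; rewrite (eqP ut) (block_sub CH tC).
Qed.

Lemma incmx_mulr p C (F : 'I_#|{set T}| -> R) : C \in H -> enum_val p \in C ->
  \sum_j incmx p j * F j = F (enum_rank C).
Proof.
by move=> CH uC; under eq_bigr => i _ do rewrite (incmx_block CH uC); exact: sumr_delta_mul.
Qed.

Lemma incmx_mulr_out p (F : 'I_#|{set T}| -> R) :
  enum_val p \notin W -> \sum_j incmx p j * F j = 0.
Proof. by move=> uW; rewrite big1 // => i _; rewrite incmx_out // mul0r. Qed.

Lemma char_join x :
  padmx W (char_entry (adjf s) x) =
  padmx W (char_entry (adjf r) x) - incmx *m quot_adjmx *m incmx^T.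
Proof.
apply/matrixP => p q; rewrite -mulmxA !mxE /char_entry /adjf.
case uW: (enum_val p \in W); last by rewrite incmx_mulr_out ?uW // subr0.
have [Cu CuH uCu] := blockP uW.
rewrite (incmx_mulr _ CuH uCu) mxE.
under eq_bigr => j _ do rewrite [incmx^T _ _]mxE mulrC.
case vW: (enum_val q \in W); last by rewrite incmx_mulr_out ?vW // subr0.
have [Cv CvH vCv] := blockP vW.
rewrite (incmx_mulr _ CvH vCv) mxE !enum_rankK CuH CvH /=.
rewrite (joinH CuH CvH uCu vCv) -addrA -opprD; congr (_ - _).
case ruv: (r _ _) => /=; last by rewrite add0r.
by rewrite (block_eq CuH CvH (closedH CuH uCu ruv) vCv) hm_irr addr0.
Qed.

Lemma incmx_gram : incmx^T *m incmx = diag_mx card_row.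
Proof.
apply/matrixP => i j; rewrite !mxE.
under eq_bigr => k _ do rewrite !mxE -natrM.
rewrite -natr_sum big_ord_enum_rank.
under eq_bigr => t _ do rewrite enum_rankK.
case: (eqVneq i j) => [<-|ne].
  rewrite mulr1n; case: (enum_val i \in H) => /=; last by rewrite big1.
  under eq_bigr => t _ do rewrite mulnb andbb.
  by congr (_%:R); rewrite -sum1_card [RHS]big_mkcond; apply: eq_bigr => t _; case: (t \in _).
rewrite mulr0n big1 // => t _.
case: (boolP (enum_val i \in H)) => iH; case: (boolP (enum_val j \in H)) => jH;
  rewrite /= ?muln0 //.
case: (boolP (t \in enum_val i)) => ti; case: (boolP (t \in enum_val j)) => tj;
  rewrite /= ?muln0 //.
by move: ne; rewrite -(inj_eq enum_val_inj) (block_eq iH jH ti tj) eqxx.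
Qed.

Lemma quot_char_similar x :
  diag_mx sqrt_card_row *m (diag_mx (shift_row x) - quot_adjmx *m diag_mx card_row) =
  padmx H (char_entry quot_entry x) *m diag_mx sqrt_card_row.
Proof.
rewrite mul_diag_mx !mul_mx_diag; apply/matrixP => i j; rewrite !mxE.
rewrite /char_entry /quot_entry (inj_eq enum_val_inj).
case: (eqVneq i j) => [<-|ne].
  rewrite hm_irr andbF mul0r subr0 mulr1n andbb.
  by case: (enum_val i \in H) => /=; [rewrite mulrC | rewrite mulr1].
rewrite !mulr0n !sub0r.
case iH: (enum_val i \in H); rewrite /= ?mul0r ?oppr0 ?mulr0 ?mul0r //.
case jH: (enum_val j \in H); rewrite /= ?mul0r ?oppr0 ?mulr0 ?mul0r //.
case hij: (hm _ _); rewrite /= ?mul0r ?oppr0 ?mulr0 ?mul0r //.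
rewrite mul1r mulrN mulNr; congr (- _).
by rewrite natrM sqrtrM ?ler0n // -mulrA -expr2 sqr_sqrtr ?ler0n.
Qed.

Lemma det_shift_row x : \det (diag_mx (shift_row x)) = \prod_(C in H) (x - (reg r C)%:R).
Proof.
rewrite det_diag big_ord_enum_rank; under eq_bigr => t _ do rewrite mxE enum_rankK.
by rewrite -big_mkcond.
Qed.

Lemma det_sqrt_card_row_neq0 : \det (diag_mx sqrt_card_row) != 0.
Proof.
rewrite det_diag big_ord_enum_rank; under eq_bigr => t _ do rewrite mxE enum_rankK.
apply/prodf_neq0 => C _; case CH: (C \in H); last exact: oner_neq0.
by rewrite sqrtr_eq0 -ltNge ltr0n card_gt0 (partition_neq0 partH CH).
Qed.

(* With M := xI - A_r, P := incmx and D := diag (x - reg C), M P = P D gives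
   xI - A_s = M (1 - P D^-1 Q P^T); Sylvester's identity moves P to the right,
   and D - Q P^T P is similar to xI minus the quotient matrix. *)
Lemma det_char_join_at x :
  \det (padmx W (char_entry (adjf r) x)) != 0 ->
  (forall C, C \in H -> x != (reg r C)%:R) ->
  \det (padmx W (char_entry (adjf s) x)) * \prod_(C in H) (x - (reg r C)%:R) =
  \det (padmx W (char_entry (adjf r) x)) * \det (padmx H (char_entry quot_entry x)).
Proof.
move=> xM xD.
set M := padmx W (char_entry (adjf r) x); set D := diag_mx (shift_row x).
have Mu : M \in unitmx by rewrite unitmxE unitfE.
have Du : D \in unitmx.
  by rewrite unitmxE unitfE det_shift_row; apply/prodf_neq0 => C CH; rewrite subr_eq0 xD.
have E1 : padmx W (char_entry (adjf s) x) =
    M *m (1%:M + incmx *m (- (invmx D *m (quot_adjmx *m incmx^T)))).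
  by rewrite char_join mulmxDr mulmx1 !mulmxN !mulmxA char_incmx mulmxK.
have E2 : 1%:M + (- (invmx D *m (quot_adjmx *m incmx^T))) *m incmx =
    invmx D *m (D - quot_adjmx *m diag_mx card_row).
  by rewrite mulNmx -!mulmxA incmx_gram mulmxBr mulVmx.
have E3 : \det (D - quot_adjmx *m diag_mx card_row) =
    \det (padmx H (char_entry quot_entry x)).
  apply: (mulfI det_sqrt_card_row_neq0).
  by rewrite -det_mulmx quot_char_similar det_mulmx mulrC.
rewrite E1 det_mulmx det1D_mulmxC E2 det_mulmx det_inv E3 -det_shift_row -/D.
rewrite -!mulrA; congr (_ * _); rewrite mulrCA mulVf ?mulr1 //.
by rewrite -unitfE -unitmxE.
Qed.

Lemma char_poly_on_join :
  char_poly_on W (adjf s) * \prod_(C in H) ('X - ((reg r C)%:R)%:P) =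
  char_poly_on W (adjf r) * char_poly_on H quot_entry.
Proof.
have XsubC_neq0 : \prod_(C in H) ('X - ((reg r C)%:R)%:P) != 0 :> {poly R}.
  by apply/prodf_neq0 => C _; rewrite polyXsubC_eq0.
apply: (poly_eq_horner_nonroot (mulf_neq0 (char_poly_on_neq0 W (adjf r)) XsubC_neq0)).
move=> x; rewrite !hornerM !horner_char_poly_on horner_prod mulf_eq0 negb_or.
under [\prod_(C in H) _]eq_bigr => C _ do rewrite hornerXsubC.
move=> /andP[xM /prodf_neq0 xD]; apply: det_char_join_at => // C CH.
by rewrite -subr_eq0 xD.
Qed.

End Join.

(** * Admissible colourings *)

Lemma card_setI_cond (T : finType) (A : {set T}) (P Q : pred T) :
  #|[set x in A | P x && Q x]| = (\sum_(x in A | P x) Q x)%N.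
Proof.
rewrite -sum1_card big_mkcond [RHS]big_mkcond; apply: eq_bigr => x _.
by rewrite inE; case: (x \in A); case: (P x); case: (Q x).
Qed.

Section ColouredGraph.
Variables (R : realType) (V : finType) (e : rel V) (k : nat) (c : V -> V -> nat).
Hypotheses (e_simple : simple_graph e) (c_col : colouring e k c) (c_adm : admissible e k c).
Hypothesis c_reg : forall i, (2 <= i <= k)%N ->
  forall C, C \in comps (gcol e c i) -> regular_on (gcol e c i) C.

Local Notation g := (gcol e c).

Lemma gcol_sym i : symmetric (g i).
Proof. by move=> x y; rewrite /gcol e_simple.1 c_col.1. Qed.

Lemma gcol_irr i : irreflexive (g i).
Proof. by move=> x; rewrite /gcol e_simple.2. Qed.

Lemma gcol_subrel i : subrel (g i.+1) (g i).
Proof. by move=> x y; rewrite /gcol /= => /andP[-> /ltnW]. Qed.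

Lemma gcol1 : g 1 =2 e.
Proof.
by move=> x y; rewrite /gcol /=; case exy: (e x y); first by case/andP: (c_col.2 x y exy).
Qed.

(* Admissibility lets us walk down from any edge colour to every smaller
   colour, so a missing colour i.+1 leaves no edge of colour >= i.+1. *)
Lemma gcol_edgeless i : ~~ [exists x, exists y, e x y && (c x y == i.+1)] ->
  g i.+1 =2 (fun _ _ => false).
Proof.
move=> none.
have noedge d x y : e x y -> c x y = (i.+1 + d)%N -> False.
  elim: d x y => [|d IH] x y exy cxy.
    move/negP: none; apply; apply/existsP; exists x; apply/existsP; exists y.
    by rewrite exy cxy addn0 eqxx.
  have [|u /andP[exu /eqP cxu]] := c_adm.2 x y exy.
    by rewrite cxy addnS !ltnS leq_addr.
  by apply: (IH x u exu); rewrite cxu cxy addnS.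
move=> x y; rewrite /gcol; case exy: (e x y) => //=.
by apply/negP => le; apply: (noedge (c x y - i.+1)%N x y exy); rewrite subnKC.
Qed.

Lemma gcol_edgeless_top i : (k <= i)%N -> g i.+1 =2 (fun _ _ => false).
Proof.
move=> ki x y; rewrite /gcol; case exy: (e x y) => //=; apply/negbTE.
by rewrite -ltnNge ltnS (leq_trans _ ki) //; case/andP: (c_col.2 x y exy).
Qed.

Lemma gcol_divides i : (0 < i)%N -> divides (g i.+1) (g i).
Proof.
move=> i_gt0; case: (boolP [exists x, exists y, e x y && (c x y == i.+1)]) => [ex|none].
  have [x /existsP[y /andP[exy /eqP cxy]]] := existsP ex.
  apply: c_adm.1; last by exists x, y; rewrite exy cxy eqxx.
  by rewrite ltnS i_gt0 -cxy; case/andP: (c_col.2 x y exy).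
exact: divides_edgeless (gcol_edgeless none) (gcol_sym i) (gcol_irr i).
Qed.

Lemma gcol_regular i C : (0 < i)%N -> C \in comps (g i.+1) -> regular_on (g i.+1) C.
Proof.
move=> i_gt0; have [ik|ki] := leqP i.+1 k; first by apply: c_reg; rewrite ltnS i_gt0.
have E z : [set t | g i.+1 z t] = set0.
  by apply/setP => t; rewrite !inE gcol_edgeless_top // -ltnS.
by move=> _ x y _ _; rewrite /deg !E.
Qed.

Let gcol_partition i W : W \in comps (g i) -> partition (subcomps (g i.+1) W) W.
Proof. exact: (partition_subcomps (gcol_sym i.+1) (gcol_sym i) (@gcol_subrel i)). Qed.

Lemma quot_mx_char_poly i H :
  char_poly (quot_mx R e c i H) = char_poly_on H (quot_entry R (g i.+1) (quot e c i)).
Proof.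
rewrite char_poly_onE; congr char_poly; apply/matrixP => p q.
by rewrite !mxE /quot_entry (inj_eq enum_val_inj).
Qed.

Lemma char_poly_comp_join i W : (0 < i)%N -> W \in comps (g i) ->
  char_poly_on W (adjf (g i)) *
    \prod_(C in subcomps (g i.+1) W) ('X - ((reg (g i.+1) C)%:R)%:P) =
  \prod_(C in subcomps (g i.+1) W) char_poly_on C (adjf (g i.+1)) *
    char_poly (quot_mx R e c i (subcomps (g i.+1) W)).
Proof.
move=> i_gt0 WP; have partW := gcol_partition WP.
have inW C : C \in subcomps (g i.+1) W -> C \in comps (g i.+1) by rewrite inE => /andP[].
rewrite quot_mx_char_poly -char_poly_on_cover ?(partition_trivIset partW) //.
rewrite (cover_partition partW).
- apply: char_poly_on_join partW _ _ _ _.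
  + by move=> C u t /inW CP; apply: (comps_closed (gcol_sym i.+1) CP).
  + by move=> C /inW; apply: gcol_regular.
  + move=> C C' u v /inW CP /inW C'P.
    exact: (divides_join (gcol_sym i.+1) (gcol_divides i_gt0) CP C'P).
  + by move=> C; rewrite /quot eqxx !andbF.
- move=> C C' u v /inW CP /inW C'P neC uC vC'; rewrite /adjf.
  suff -> : g i.+1 u v = false by [].
  apply: contra_neqF neC => ruv; apply: (comps_eq (gcol_sym i.+1) CP C'P _ vC').
  exact: (comps_closed (gcol_sym i.+1) CP uC ruv).
Qed.

Lemma mup_char_small_comp i C (l : R) : C \in comps (g i) -> (#|C| < 2)%N ->
  mup l (char_poly_on C (adjf (g i))) = ((reg (g i) C)%:R == l).
Proof.
move=> CP C1; have [v Cv] : exists v, C = [set v].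
  by apply/cards1P; rewrite eqn_leq -ltnS C1 lt0n cards_eq0 (comps_neq0 CP).
have gv0 t : g i v t = false.
  apply: contraTF (set11 v) => gvt; have := comps_closed (gcol_sym i) CP _ gvt.
  by rewrite Cv => /(_ (set11 v)) /set1P tv; move: gvt; rewrite tv gcol_irr.
rewrite Cv char_poly_on_set1 mup_XsubC /adjf gv0 /reg.
case: pickP => [u /set1P -> | //]; rewrite /deg.
by under eq_finset do rewrite gv0; rewrite cards0.
Qed.

(* The multiplicity of l in sigma(A(g_h(i+1), h)) / reg(g_h^+(i+1)), for H = h. *)
Definition quot_term i (l : R) (H : {set {set V}}) : int :=
  (spec_mult (quot_mx R e c i H) l)%:Z -
  (#|[set C in H | (2 <= #|C|)%N && ((reg (g i.+1) C)%:R == l)]|)%:Z.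

Definition comp_spec_mult i (l : R) : int :=
  \sum_(W in comps (g i) | (1 < #|W|)%N) (mup l (char_poly_on W (adjf (g i))))%:Z.

Lemma mup_comp_split i W l : (0 < i)%N -> W \in comps (g i) ->
  (mup l (char_poly_on W (adjf (g i))))%:Z =
  \sum_(C in subcomps (g i.+1) W | (1 < #|C|)%N) (mup l (char_poly_on C (adjf (g i.+1))))%:Z
  + quot_term i l (subcomps (g i.+1) W).
Proof.
move=> i_gt0 WP; set H := subcomps (g i.+1) W.
have inH C : C \in H -> C \in comps (g i.+1) by rewrite inE => /andP[].
have := congr1 (mup l) (char_poly_comp_join i_gt0 WP).
rewrite -/H !mupM ?monic_neq0 ?char_poly_on_monic ?char_poly_monic ?monic_prod_XsubC //;
  last by apply: monic_prod => C _; apply: char_poly_on_monic.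
rewrite !mup_prod => [|C _|C _]; [| by rewrite polyXsubC_eq0 | exact: char_poly_on_neq0].
under eq_bigr do rewrite mup_XsubC.
have split_small (F : {set V} -> nat) : (\sum_(C in H) F C =
    \sum_(C in H | 1 < #|C|) F C + \sum_(C in H | ~~ (1 < #|C|)) F C)%N.
  exact: bigID.
have small : (\sum_(C in H | ~~ (1 < #|C|)) mup l (char_poly_on C (adjf (g i.+1))) =
    \sum_(C in H | ~~ (1 < #|C|)) ((reg (g i.+1) C)%:R == l))%N.
  by apply: eq_bigr => C /andP[CH C1]; rewrite mup_char_small_comp ?inH // ltnS leqNgt.
rewrite !split_small small /quot_term card_setI_cond -(big_morph Posz PoszD erefl).
rewrite /spec_mult => E; apply/eqP; rewrite addrA eq_sym subr_eq -!PoszD eqz_nat.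
(* [set] also abstracts the copies elaborated through other instance paths of R. *)
set M := (\sum_(C in H | _) mup l _)%N in E *; set q := mup l (char_poly _) in E *.
by move: E; rewrite addnA [(M + _ + q)%N]addnAC => /eqP; rewrite eqn_add2r => /eqP ->.
Qed.

Lemma quot_term_set1 i (W : {set V}) l : (1 < #|W|)%N -> quot_term i l [set W] = 0.
Proof.
move=> W2; rewrite /quot_term /spec_mult quot_mx_char_poly char_poly_on_set1 mup_XsubC.
by rewrite /quot_entry eqxx card_setI_cond big_mkcondr big_set1 W2 subrr.
Qed.

Lemma a_cE i : a_c e c i =
  [set subcomps (g i.+1) W | W in [set W in comps (g i) | (1 < #|subcomps (g i.+1) W|)%N]].
Proof.
have quotE : quot e c i = quot_rel (g i.+1) (g i) by [].
have classE := quot_rel_class (gcol_sym i.+1) (gcol_sym i) (@gcol_subrel i).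
apply/setP => H; rewrite /a_c quotE inE; apply/andP/imsetP.
  case=> /imsetP[B /compsP[x ->] ->] H2; exists (comp (g i) x) => //.
  by rewrite inE comp_in_comps -classE.
case=> W; rewrite inE => /andP[/compsP[x ->] H2] ->; split => //.
by apply/imsetP; exists (comp (g i.+1) x); rewrite ?comp_in_comps ?classE.
Qed.

Lemma sum_quot_terms i l : (0 < i)%N ->
  \sum_(W in comps (g i) | (1 < #|W|)%N) quot_term i l (subcomps (g i.+1) W) =
  \sum_(H in a_c e c i) quot_term i l H.
Proof.
move=> i_gt0; rewrite a_cE big_imset /=; last first.
  move=> W W'; rewrite !inE => /andP[WP _] /andP[W'P _] E.
  by rewrite -(cover_partition (gcol_partition WP)) E (cover_partition (gcol_partition W'P)).
rewrite big_mkcond [RHS]big_mkcond; apply: eq_bigr => W _; rewrite inE.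
case WP: (W \in comps (g i)) => //=.
have [H2|H1] := ltnP 1 #|subcomps (g i.+1) W|.
  by rewrite (leq_trans H2) // (card_subcomps (gcol_sym _) (gcol_sym _) (@gcol_subrel i) WP).
rewrite (subcomps_small (gcol_sym _) (gcol_sym _) (@gcol_subrel i) WP) //.
by case: ifP => // /quot_term_set1 ->.
Qed.

Lemma comp_spec_mult_step i l : (0 < i)%N ->
  comp_spec_mult i l = comp_spec_mult i.+1 l + \sum_(H in a_c e c i) quot_term i l H.
Proof.
move=> i_gt0; rewrite -sum_quot_terms // /comp_spec_mult.
rewrite -(sum_subcomps (gcol_sym i) (@gcol_subrel i)) -big_split /=.
by apply: eq_bigr => W /andP[WP _]; apply: mup_comp_split.
Qed.

Lemma comp_spec_mult_top l : comp_spec_mult k.+1 l = 0.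
Proof.
rewrite /comp_spec_mult big1 // => W /andP[/compsP[x ->]].
by rewrite (comp_edgeless x (gcol_edgeless_top (leqnn k))) cards1.
Qed.

Lemma comp_spec_mult_one l : connected_graph e -> (1 < #|V|)%N ->
  comp_spec_mult 1 l = (spec_mult (adj_mx R e) l)%:Z.
Proof.
move=> e_conn V2; have [x0 _] : exists x0 : V, x0 \in V by apply/card_gt0P; apply: ltnW.
have compT x : comp (g 1) x = [set: V].
  by apply/setP => y; rewrite !inE (eq_connect gcol1) e_conn.
rewrite /comp_spec_mult; have -> : comps (g 1) = [set [set: V]].
  apply/setP => W; rewrite inE; apply/compsP/eqP => [[y ->]|->]; first exact: compT.
  by exists x0; rewrite compT.
rewrite big_mkcondr big_set1 cardsT V2 char_poly_on_setT.
by congr (Posz (mup l (char_poly _))); apply/matrixP => p q; rewrite !mxE /adjf gcol1.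
Qed.

End ColouredGraph.

Theorem mainTheorem4 (R : realType) (V : finType) (e : rel V) (k : nat)
    (c : V -> V -> nat) :
  simple_graph e -> connected_graph e -> (1 < #|V|)%N ->
  colouring e k c -> admissible e k c ->
  (forall i, (2 <= i <= k)%N ->
     forall C, C \in comps (gcol e c i) -> regular_on (gcol e c i) C) ->
  forall lambda : R,
    ((spec_mult (adj_mx R e) lambda)%:Z : int) =
    \sum_(1 <= i < k.+1)
      \sum_(H in a_c e c i)
        ((spec_mult (quot_mx R e c i H) lambda)%:Z
         - (#|[set C in H | (2 <= #|C|)%N &&
                ((reg (gcol e c i.+1) C)%:R == lambda)]|)%:Z).
Proof.
move=> e_simple e_conn V2 c_col c_adm c_reg l.
rewrite -(comp_spec_mult_one c_col l e_conn V2).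
rewrite (telescope_sumr_eq (fun i => - comp_spec_mult e c i l)) //.
  by rewrite (comp_spec_mult_top c_col) oppr0 add0r opprK.
move=> i /andP[i_gt0 _].
by rewrite (comp_spec_mult_step e_simple c_col c_adm c_reg l i_gt0) opprK addrA addNr add0r.
Qed.
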